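(* Let $(R,\mathfrak{m})$ be a Noetherian local ring and $I$ an $R$-ideal of analytic spread $\ell$. Let $s\ge 0$ be an integer, let $f_1,\ldots,f_{\ell+s}$ be elements of $I$, and set $\mathfrak{a}=(f_1,\ldots,f_{\ell-1})$ and $K=(f_1,\ldots,f_{\ell+s})$. Let $\varphi:\mathcal{F}(K)\to\mathcal{F}(I)$ be the natural map of special fiber rings. Then \[I^n=(f_1,\ldots,f_{\ell-1})I^{n-1}+(f_\ell,\ldots,f_{\ell+s})^n\quad\text{for all } n\gg0\] if and only if $\operatorname{coker}(\varphi)$ is a finite $\mathcal{F}(\mathfrak{a})$-module.
   Context: For an ideal $L$ of the local ring $(R,\mathfrak{m})$, $\mathcal{F}(L)=\bigoplus_{m\ge0}L^m/\mathfrak{m}L^m$ is the special fiber ring and $\ell(L)=\dim\mathcal{F}(L)$ is the analytic spread. The natural maps $\mathcal{F}(K)\to\mathcal{F}(I)$ and $\mathcal{F}(\mathfrak{a})\to\mathcal{F}(I)$ are induced by the inclusions $K\subset I$, $\mathfrak{a}\subset I$; $\operatorname{coker}(\varphi)$ is an $\mathcal{F}(\mathfrak{a})$-module via the latter. *)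

From HB Require Import structures.
From mathcomp Require Import all_boot all_order all_algebra.
Set Implicit Arguments. Unset Strict Implicit. Unset Printing Implicit Defensive.
Import Order.TTheory GRing.Theory Num.Theory.
Local Open Scope ring_scope.

Section Defs.
Variable R : comUnitRingType.

Definition ideal (I : R -> Prop) : Prop :=
  [/\ I 0, (forall x y, I x -> I y -> I (x + y)) & (forall r x, I x -> I (r * x))].

Definition span_range (f : nat -> R) (lo hi : nat) : R -> Prop :=
  fun x => exists c : nat -> R, x = \sum_(lo <= i < hi) c i * f i.

Definition ideal_add (I J : R -> Prop) : R -> Prop :=
  fun x => exists a b, [/\ I a, J b & x = a + b].

Definition ideal_mul (I J : R -> Prop) : R -> Prop :=
  fun x => exists (n : nat) (a b : nat -> R),
    [/\ forall i, I (a i), forall i, J (b i) & x = \sum_(i < n) a i * b i].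

Fixpoint ideal_pow (I : R -> Prop) (n : nat) : R -> Prop :=
  match n with
  | 0 => fun _ => True
  | k.+1 => ideal_mul I (ideal_pow I k)
  end.

Definition noetherian : Prop :=
  forall I, ideal I -> exists (n : nat) (g : nat -> R),
    forall x, I x <-> span_range g 0 n x.

Definition is_local_max (m : R -> Prop) : Prop :=
  [/\ ideal m, ~ m 1 & forall x, ~ m x -> x \is a GRing.unit].

(* Representatives of elements of a graded object  (+)_n D n :
   finitely supported sequences with g n in D n. *)
Definition homog_rep (D : nat -> R -> Prop) (g : nat -> R) : Prop :=
  (forall n, D n (g n)) /\ exists N, forall n, (N <= n)%N -> g n = 0.

(* graded (convolution) product of representatives *)
Definition conv (g h : nat -> R) : nat -> R :=
  fun n => \sum_(i < n.+1) g i * h (n - i)%N.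

Definition fib_one : nat -> R := fun n => if n is 0 then 1 else 0.

(* Special fiber ring F(L) = (+)_n L^n / m L^n, represented by
   representatives modulo componentwise  m L^n.
   A prime ideal of F(L), given by the set of its representatives. *)
Definition fiber_prime (m L : R -> Prop) (P : (nat -> R) -> Prop) : Prop :=
  let rep := homog_rep (ideal_pow L) in
  [/\ forall g, rep g -> (forall n, ideal_mul m (ideal_pow L n) (g n)) -> P g,
      forall g h, rep g -> rep h -> P g -> P h -> P (fun n => g n + h n),
      forall g h, rep g -> rep h -> P h -> P (conv g h),
      ~ P fib_one &
      forall g h, rep g -> rep h -> P (conv g h) -> P g \/ P h].

Definition fiber_strict (m L : R -> Prop) (P Q : (nat -> R) -> Prop) : Prop :=
  let rep := homog_rep (ideal_pow L) in
  (forall g, rep g -> P g -> Q g) /\ exists g, [/\ rep g, Q g & ~ P g].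

Definition fiber_chain (m L : R -> Prop) (P : nat -> (nat -> R) -> Prop) (d : nat)
  : Prop :=
  (forall i, (i <= d)%N -> fiber_prime m L (P i)) /\
  (forall i, (i < d)%N -> fiber_strict m L (P i) (P i.+1)).

Definition analytic_spread (m L : R -> Prop) (l : nat) : Prop :=
  (exists P, fiber_chain m L P l) /\ (forall P, ~ fiber_chain m L P l.+1).

(* coker(phi) = (+)_n I^n / (K^n + m I^n) is a finitely generated
   F(a)-module: finitely many elements gs generate it over F(a). *)
Definition coker_finite (m I K a : R -> Prop) : Prop :=
  exists (r : nat) (gs : 'I_r -> nat -> R),
    (forall i, homog_rep (ideal_pow I) (gs i)) /\
    forall y, homog_rep (ideal_pow I) y ->
      exists cs : 'I_r -> nat -> R,
        (forall i, homog_rep (ideal_pow a) (cs i)) /\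
        forall n, ideal_add (ideal_pow K n) (ideal_mul m (ideal_pow I n))
                    (y n - \sum_(i < r) conv (cs i) (gs i) n).

End Defs.

From mathcomp Require Import all_boot all_order all_algebra zify.
Set Implicit Arguments. Unset Strict Implicit. Unset Printing Implicit Defensive.
Import GRing.Theory.
Local Open Scope ring_scope.

(* Write J = (f_l, ..., f_(l+s)), so that K = a + J.
   If I^n = a I^(n-1) + J^n for n >= N, choose finite generating sets of
   I^0, ..., I^N (R is Noetherian) and place them in their degrees.  Descending
   with the reduction equation, every element of I^n is, modulo K^n, an
   F(a)-combination of these generators, so coker(phi) is finite over F(a).
   Conversely, if coker(phi) is generated in degrees < N, then for n >= N
   every element of I^n lies in a I^(n-1) + K^n + m I^n, which is contained in
   a I^(n-1) + J^n + m I^n, and Nakayama's lemma removes m I^n. *)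

Section Ideals.
Variable R : comUnitRingType.
Implicit Types (A B C I J K a : R -> Prop) (f : nat -> R).

Lemma ideal0 C : ideal C -> C 0.
Proof. by case. Qed.

Lemma idealD C x y : ideal C -> C x -> C y -> C (x + y).
Proof. by case=> _ CD _; apply: CD. Qed.

Lemma idealMl C r x : ideal C -> C x -> C (r * x).
Proof. by case=> _ _ CM; apply: CM. Qed.

Lemma idealMr C r x : ideal C -> C x -> C (x * r).
Proof. by move=> iC Cx; rewrite mulrC; apply: idealMl. Qed.

Lemma ideal_sum C (T : Type) (r : seq T) (P : pred T) (F : T -> R) :
  ideal C -> (forall i, P i -> C (F i)) -> C (\sum_(i <- r | P i) F i).
Proof.
by move=> iC CF; elim/big_ind: _ => //; [exact: ideal0 | move=> x y; apply: idealD].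
Qed.

Lemma ideal_mul_mem A B x y : A x -> B y -> ideal_mul A B (x * y).
Proof.
by move=> Ax By; exists 1%N, (fun _ => x), (fun _ => y); rewrite big_ord1.
Qed.

Lemma ideal_mul_mulr_sub A B C z :
  ideal C -> (forall x y, A x -> B y -> C (x * y * z)) ->
  forall x, ideal_mul A B x -> C (x * z).
Proof.
move=> iC ABC _ [n [x [y [Ax By ->]]]]; rewrite big_distrl /=.
by apply: ideal_sum => // i _; apply: ABC.
Qed.

Lemma ideal_mul_sub A B C :
  ideal C -> (forall x y, A x -> B y -> C (x * y)) ->
  forall x, ideal_mul A B x -> C x.
Proof.
move=> iC ABC x ABx; rewrite -[x]mulr1; apply: ideal_mul_mulr_sub ABx => //.
by move=> ? ? Ax By; rewrite mulr1; apply: ABC.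
Qed.

Lemma ideal_mul_ideal A B : ideal A -> ideal B -> ideal (ideal_mul A B).
Proof.
move=> iA iB; split.
- exists 0%N, (fun _ => 0), (fun _ => 0).
  by rewrite big_ord0; split=> // _; apply: ideal0.
- move=> _ _ [n [x [y [Ax By ->]]]] [n' [x' [y' [Ax' By' ->]]]].
  exists (n + n')%N, (fun i => if (i < n)%N then x i else x' (i - n)%N),
    (fun i => if (i < n)%N then y i else y' (i - n)%N); split.
  + by move=> i; case: ifP.
  + by move=> i; case: ifP.
  rewrite big_split_ord /=; congr (_ + _).
    by apply: eq_bigr => i _; rewrite /= ltn_ord.
  by apply: eq_bigr => i _; rewrite /= ltnNge leq_addr /= addKn.
- move=> r _ [n [x [y [Ax By ->]]]].
  exists n, (fun i => r * x i), y; split=> // [i|]; first exact: idealMl.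
  by rewrite big_distrr; apply: eq_bigr => i _ /=; rewrite mulrA.
Qed.

Lemma ideal_pow_ideal I n : ideal I -> ideal (ideal_pow I n).
Proof. by move=> iI; elim: n => [|n IH] /=; [split | exact: ideal_mul_ideal]. Qed.

Lemma ideal_add_ideal A B : ideal A -> ideal B -> ideal (ideal_add A B).
Proof.
move=> iA iB; split.
- by exists 0, 0; rewrite addr0; split=> //; apply: ideal0.
- move=> _ _ [x [y [Ax By ->]]] [x' [y' [Ax' By' ->]]].
  by exists (x + x'), (y + y'); rewrite addrACA; split=> //; apply: idealD.
- move=> r _ [x [y [Ax By ->]]].
  by exists (r * x), (r * y); rewrite mulrDr; split=> //; apply: idealMl.
Qed.

Lemma ideal_add_meml A B x : ideal B -> A x -> ideal_add A B x.
Proof. by move=> iB Ax; exists x, 0; rewrite addr0; split=> //; apply: ideal0. Qed.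

Lemma ideal_add_memr A B x : ideal A -> B x -> ideal_add A B x.
Proof. by move=> iA Bx; exists 0, x; rewrite add0r; split=> //; apply: ideal0. Qed.

Lemma span_range_ideal f lo hi : ideal (span_range f lo hi).
Proof.
split.
- by exists (fun _ => 0); rewrite big1 // => i _; rewrite mul0r.
- move=> _ _ [c ->] [c' ->]; exists (fun i => c i + c' i).
  by rewrite -big_split; apply: eq_bigr => i _; rewrite mulrDl.
- move=> r _ [c ->]; exists (fun i => r * c i).
  by rewrite big_distrr; apply: eq_bigr => i _ /=; rewrite mulrA.
Qed.

Lemma span_range_mem f lo hi i : (lo <= i < hi)%N -> span_range f lo hi (f i).
Proof.
move=> Hi; exists (fun j => if j == i then 1 else 0).
rewrite (bigD1_seq i) ?mem_index_iota ?iota_uniq //= eqxx mul1r.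
by rewrite big1 ?addr0 // => j /negPf ->; rewrite mul0r.
Qed.

Lemma span_range_sub f lo hi C :
  ideal C -> (forall i, (lo <= i < hi)%N -> C (f i)) ->
  forall x, span_range f lo hi x -> C x.
Proof.
move=> iC Cf _ [c ->]; rewrite big_nat_cond.
by apply: ideal_sum => // i /andP[Hi _]; apply: idealMl => //; apply: Cf.
Qed.

Lemma span_range_mono f lo hi lo' hi' x :
  (lo' <= lo)%N -> (hi <= hi')%N -> span_range f lo hi x -> span_range f lo' hi' x.
Proof.
move=> lo_le hi_le; apply: span_range_sub; first exact: span_range_ideal.
by move=> i /andP[? ?]; apply: span_range_mem; apply/andP; split; lia.
Qed.

Lemma span_range_split f lo mid hi x :
  (lo <= mid <= hi)%N -> span_range f lo hi x ->
  ideal_add (span_range f lo mid) (span_range f mid hi) x.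
Proof.
move=> /andP[lo_mid mid_hi] [c ->]; rewrite (big_cat_nat lo_mid mid_hi).
by exists (\sum_(lo <= i < mid) c i * f i), (\sum_(mid <= i < hi) c i * f i);
  split=> //; exists c.
Qed.

Lemma ideal_pow_mono A B n :
  ideal B -> (forall x, A x -> B x) -> forall x, ideal_pow A n x -> ideal_pow B n x.
Proof.
move=> iB AB; elim: n => [//|n IH].
apply: ideal_mul_sub; first exact: (ideal_pow_ideal n.+1 iB).
by move=> x y Ax Ay; apply: ideal_mul_mem; [apply: AB | apply: IH].
Qed.

Lemma ideal_powD I p q x y :
  ideal I -> ideal_pow I p x -> ideal_pow I q y -> ideal_pow I (p + q) (x * y).
Proof.
move=> iI; elim: p x => [|p IH] x Ix Iy /=.
  by apply: idealMl => //; apply: ideal_pow_ideal.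
apply: ideal_mul_mulr_sub Ix; first exact: (ideal_pow_ideal (p + q).+1 iI).
by move=> u v Iu Iv; rewrite -mulrA; apply: ideal_mul_mem => //; apply: IH.
Qed.

Lemma ideal_mul_powS a I n y u :
  ideal a -> ideal I -> I y -> ideal_mul a (ideal_pow I n.-1) u ->
  ideal_mul a (ideal_pow I n) (y * u).
Proof.
move=> ia iI Iy; have iaI := ideal_mul_ideal ia (ideal_pow_ideal n iI).
case: n iaI => [|n] iaI au /=; first exact: idealMl.
rewrite mulrC; apply: ideal_mul_mulr_sub au => // x v ax Iv.
by rewrite -mulrA; apply: ideal_mul_mem; rewrite // mulrC; apply: ideal_mul_mem.
Qed.

Lemma ideal_mul_pow_sub a I k n u v :
  ideal a -> ideal I -> (forall x, a x -> I x) -> (1 <= k <= n)%N ->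
  ideal_pow a k u -> ideal_pow I (n - k) v -> ideal_mul a (ideal_pow I n.-1) (u * v).
Proof.
move=> ia iI aI; case: k => [//|k] /= kn au Iv.
have iaI := ideal_mul_ideal ia (ideal_pow_ideal n.-1 iI).
apply: ideal_mul_mulr_sub au => // x w ax aw; rewrite -mulrA.
apply: ideal_mul_mem => //; have -> : n.-1 = (k + (n - k.+1))%N by lia.
by apply: ideal_powD => //; apply: (ideal_pow_mono iI aI).
Qed.

Lemma ideal_pow_add_sub a J I n x :
  ideal a -> ideal J -> ideal I -> (forall x, a x -> I x) -> (forall x, J x -> I x) ->
  ideal_add (ideal_mul a (ideal_pow I n.-1)) (ideal_pow J n) x ->
  ideal_pow I n x.
Proof.
move=> ia iJ iI aI JI [u [v [au Jv ->]]]; apply: idealD; first exact: ideal_pow_ideal.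
  case: n au Jv => [|n] au _ //.
  apply: ideal_mul_sub au; first exact: (ideal_pow_ideal n.+1 iI).
  by move=> y w /aI Iy Iw; apply: ideal_mul_mem.
exact: (ideal_pow_mono iI JI).
Qed.

Lemma ideal_pow_sub_add a J K I n x :
  ideal a -> ideal J -> ideal I -> (forall x, a x -> I x) -> (forall x, J x -> I x) ->
  (forall x, K x -> ideal_add a J x) -> ideal_pow K n x ->
  ideal_add (ideal_mul a (ideal_pow I n.-1)) (ideal_pow J n) x.
Proof.
move=> ia iJ iI aI JI KaJ.
have KI y : K y -> I y.
  by move=> /KaJ [u [v [au Jv ->]]]; apply: idealD => //; [apply: aI | apply: JI].
have iaI k := ideal_mul_ideal ia (ideal_pow_ideal k iI).
elim: n x => [|n IH] x Kx; first exact: ideal_add_memr.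
have iT := ideal_add_ideal (iaI n) (ideal_pow_ideal n.+1 iJ).
apply: ideal_mul_sub Kx => // y w /KaJ [u [v [au Jv ->]]] Kw.
rewrite mulrDl; apply: idealD => //.
  apply: ideal_add_meml; first exact: ideal_pow_ideal.
  by apply: ideal_mul_mem => //; apply: (ideal_pow_mono iI KI).
have [u' [v' [au' Jv' ->]]] := IH w Kw; rewrite mulrDr; apply: idealD => //.
  apply: ideal_add_meml; first exact: ideal_pow_ideal.
  by apply: ideal_mul_powS => //; apply: JI.
by apply: ideal_add_memr => //; apply: ideal_mul_mem.
Qed.

End Ideals.

Section Nakayama.
Variables (R : comUnitRingType) (m : R -> Prop).
Hypothesis local_m : is_local_max m.

Let ideal_m : ideal m. Proof. by case: local_m. Qed.

Lemma local_one_sub_cancel (L : R -> Prop) nu x :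
  ideal L -> m nu -> L ((1 - nu) * x) -> L x.
Proof.
case: local_m => _ m1 mU iL mnu Lx.
have unit_nu : 1 - nu \is a GRing.unit.
  apply: mU => m1nu; apply: m1; rewrite -(subrK nu 1).
  exact: idealD.
by rewrite -(mulKr unit_nu x); apply: idealMl.
Qed.

(* Induction on the number of generators: the last generator [g p] is absorbed
   into the ideal [L], and then shown to lie in [L] itself by [local_one_sub_cancel]. *)
Lemma nakayama_gen (g : nat -> R) p (L : R -> Prop) :
  ideal L ->
  (forall t, (t < p)%N -> exists l mu, [/\ L l, (forall k, m (mu k)) &
      g t = l + \sum_(0 <= k < p) mu k * g k]) ->
  forall t, (t < p)%N -> L (g t).
Proof.
elim: p L => [//|p IH] L iL gL.
pose L' := ideal_add L (span_range g p p.+1).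
have iL' : ideal L' by apply: ideal_add_ideal => //; apply: span_range_ideal.
have L'E x : L' x -> exists l c, L l /\ x = l + c * g p.
  by move=> [l [_ [Ll [c ->] ->]]]; exists l, (c p); rewrite big_nat1.
have gL' t : (t < p)%N -> L' (g t).
  apply: IH => // {}t tp.
  have [l [mu [Ll mmu ->]]] := gL t (ltnW tp).
  exists (l + mu p * g p), mu; split=> //.
    by exists l, (mu p * g p); split=> //; exists (fun _ => mu p); rewrite big_nat1.
  by rewrite big_nat_recr //= addrAC addrA.
pose S x := exists l nu, [/\ L l, m nu & x = l + nu * g p].
have S_sum mu : (forall k, m (mu k)) -> S (\sum_(0 <= k < p) mu k * g k).
  move=> mmu; rewrite big_nat_cond; elim/big_ind: _.
  - by exists 0, 0; rewrite mul0r addr0; split=> //; apply: ideal0.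
  - move=> _ _ [l [nu [Ll mnu ->]]] [l' [nu' [Ll' mnu' ->]]].
    exists (l + l'), (nu + nu'); rewrite mulrDl addrACA.
    by split=> //; apply: idealD.
  move=> k /andP[/andP[_ kp] _]; have [l [c [Ll ->]]] := L'E _ (gL' k kp).
  exists (mu k * l), (mu k * c); rewrite mulrDr mulrA.
  by split=> //; [apply: idealMl | apply: idealMr].
have Lgp : L (g p).
  have [l [mu [Ll mmu]]] := gL p (ltnSn p).
  rewrite big_nat_recr //=; have [l' [nu [Ll' mnu ->]]] := S_sum mu mmu.
  move=> gpE; apply: (@local_one_sub_cancel _ (nu + mu p)) => //; first exact: idealD.
  have -> : (1 - (nu + mu p)) * g p = l + l'.
    by apply/eqP; rewrite mulrBl mul1r subr_eq {1}gpE mulrDl !addrA.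
  exact: idealD.
move=> t; rewrite ltnS leq_eqVlt => /orP[/eqP -> //| tp].
have [l [c [Ll ->]]] := L'E _ (gL' t tp).
by apply: idealD => //; apply: idealMl.
Qed.

Lemma ideal_mul_span (M : R -> Prop) (g : nat -> R) p :
  (forall x, M x <-> span_range g 0 p x) ->
  forall y, ideal_mul m M y ->
    exists mu, (forall k, m (mu k)) /\ y = \sum_(0 <= k < p) mu k * g k.
Proof.
move=> ME _ [n [x [y [mx My ->]]]]; elim: n => [|n [mu [mmu sumE]]].
  exists (fun _ => 0); rewrite big_ord0 big1 => [|k _]; last by rewrite mul0r.
  by split=> // _; apply: ideal0.
have [c ycE] := (ME _).1 (My n).
exists (fun k => mu k + x n * c k); split=> [k|].
  by apply: idealD => //; apply: idealMr.
rewrite big_ord_recr sumE ycE big_distrr /= -big_split.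
by apply: eq_bigr => k _; rewrite mulrDl mulrA.
Qed.

Lemma nakayama (L M : R -> Prop) (g : nat -> R) p :
  ideal L -> (forall x, M x <-> span_range g 0 p x) ->
  (forall x, M x -> ideal_add L (ideal_mul m M) x) -> forall x, M x -> L x.
Proof.
move=> iL ME M_sub.
have Lg : forall t, (t < p)%N -> L (g t).
  apply: nakayama_gen => // t tp.
  have [|l [y [Ll my ->]]] := M_sub (g t); first by apply/ME; apply: span_range_mem.
  by have [mu [mmu ->]] := ideal_mul_span ME my; exists l, mu.
by move=> x /ME; apply: span_range_sub => // i /andP[_]; apply: Lg.
Qed.

End Nakayama.

Section Convolution.
Variable R : comUnitRingType.

Definition delta_seq (d : nat) (x : R) : nat -> R := fun n => if n == d then x else 0.

Lemma conv_addl (g h k : nat -> R) n :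
  conv (fun j => g j + h j) k n = conv g k n + conv h k n.
Proof. by rewrite /conv -big_split; apply: eq_bigr => i _; rewrite mulrDl. Qed.

Lemma conv0l (k : nat -> R) n : conv (fun _ => 0) k n = 0.
Proof. by rewrite /conv big1 // => i _; rewrite mul0r. Qed.

Lemma conv_delta e d (x y : R) n :
  conv (delta_seq e x) (delta_seq d y) n = delta_seq (e + d) (x * y) n.
Proof.
rewrite /conv /delta_seq (eq_bigr (fun k : 'I_n.+1 =>
  if (k : nat) == e then x * (if (n - k)%N == d then y else 0) else 0)); last first.
  by move=> k _; case: eqP; rewrite ?mul0r.
rewrite -big_mkcond (big_ord1_eq _ (fun k => x * (if (n - k)%N == d then y else 0))).
case: ltnP => [lt_ne | le_en]; case: (n =P (e + d)%N) => nE;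
  case: ((n - e)%N =P d) => dE //; try lia.
by rewrite mulr0.
Qed.

End Convolution.

Section CokerSpan.
Variables (R : comUnitRingType) (a K : R -> Prop).
Hypotheses (ideal_a : ideal a) (ideal_K : ideal K) (a_sub_K : forall x, a x -> K x).
Variables (r : nat) (deg : 'I_r -> nat) (G : 'I_r -> R).

(* [x], of degree [n], lies modulo [K^n] in the [F(a)]-span of the generators
   [G i] of degree [deg i]. *)
Definition coker_span n x := exists c : 'I_r -> R,
  [/\ forall i, (deg i <= n)%N -> ideal_pow a (n - deg i) (c i),
      forall i, (n < deg i)%N -> c i = 0 &
      ideal_pow K n (x - \sum_(i < r) c i * G i)].

Let ideal_pow_a n := ideal_pow_ideal n ideal_a.
Let ideal_pow_K n := ideal_pow_ideal n ideal_K.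

Lemma coker_span_ideal n : ideal (coker_span n).
Proof.
split.
- exists (fun _ => 0); rewrite big1 => [|i _]; last by rewrite mul0r.
  by rewrite subr0; split=> [i _|//|]; apply: ideal0.
- move=> x y [c [c_deg c0 Kx]] [c' [c'_deg c'0 Ky]].
  exists (fun i => c i + c' i); split.
  + by move=> i le_i; apply: idealD => //; [apply: c_deg | apply: c'_deg].
  + by move=> i lt_i; rewrite c0 // c'0 // addr0.
  rewrite (eq_bigr (fun i => c i * G i + c' i * G i)) => [|i _]; last exact: mulrDl.
  by rewrite big_split /= opprD addrACA; apply: idealD.
- move=> s x [c [c_deg c0 Kx]]; exists (fun i => s * c i); split.
  + by move=> i le_i; apply: idealMl => //; apply: c_deg.
  + by move=> i lt_i; rewrite c0 // mulr0.
  rewrite (eq_bigr (fun i => s * (c i * G i))) => [|i _]; last by rewrite mulrA.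
  by rewrite -big_distrr -mulrBr; apply: idealMl.
Qed.

Lemma coker_span_pow n x : ideal_pow K n x -> coker_span n x.
Proof.
move=> Kx; exists (fun _ => 0); rewrite big1 => [|i _]; last by rewrite mul0r.
by rewrite subr0; split=> // i _; apply: ideal0.
Qed.

Lemma coker_spanMl n y x : a y -> coker_span n x -> coker_span n.+1 (y * x).
Proof.
move=> ay [c [c_deg c0 Kx]]; exists (fun i => y * c i); split.
- move=> i; rewrite leq_eqVlt => /orP[/eqP deg_i | lt_i].
    by rewrite c0 ?deg_i // mulr0; apply: ideal0.
  by rewrite subSn //; apply: ideal_mul_mem => //; apply: c_deg.
- by move=> i lt_i; rewrite c0 ?mulr0 // ltnW.
rewrite (eq_bigr (fun i => y * (c i * G i))) => [|i _]; last by rewrite mulrA.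
by rewrite -big_distrr -mulrBr; apply: ideal_mul_mem => //; apply: a_sub_K.
Qed.

Lemma coker_span_of_reduction (I J : R -> Prop) N :
  (forall x, J x -> K x) -> (0 < N)%N ->
  (forall n, (N <= n)%N -> forall x, ideal_pow I n x ->
      ideal_add (ideal_mul a (ideal_pow I n.-1)) (ideal_pow J n) x) ->
  (forall n, (n < N)%N -> forall x, ideal_pow I n x -> coker_span n x) ->
  forall n x, ideal_pow I n x -> coker_span n x.
Proof.
move=> J_sub_K N_gt0 reduction base n; elim/ltn_ind: n => n IH x Ix.
have [lt_nN | le_Nn] := ltnP n N; first exact: base.
have [u [v [au Jv ->]]] := reduction n le_Nn x Ix.
apply: idealD; first exact: coker_span_ideal.
  case: n le_Nn IH au {Ix Jv} => [|n] le_Nn IH; first by move: N_gt0; rewrite ltnNge le_Nn.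
  apply: ideal_mul_sub; first exact: coker_span_ideal.
  by move=> y w ay Iw; apply: coker_spanMl => //; apply: IH.
by apply: coker_span_pow; apply: (ideal_pow_mono ideal_K J_sub_K).
Qed.

Definition gen_seq i := delta_seq (deg i) (G i).

Definition coker_spanned (y : nat -> R) := exists cs : 'I_r -> nat -> R,
  (forall i, homog_rep (ideal_pow a) (cs i)) /\
  forall n, ideal_pow K n (y n - \sum_(i < r) conv (cs i) (gen_seq i) n).

Lemma coker_spannedD y z :
  coker_spanned y -> coker_spanned z -> coker_spanned (fun n => y n + z n).
Proof.
move=> [cs [cs_rep Ky]] [ds [ds_rep Kz]].
exists (fun i k => cs i k + ds i k); split.
  move=> i; have [cs_a [Nc Nc0]] := cs_rep i; have [ds_a [Nd Nd0]] := ds_rep i.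
  split=> [k|]; first exact: idealD.
  exists (maxn Nc Nd) => k; rewrite geq_max => /andP[? ?].
  by rewrite Nc0 // Nd0 // addr0.
move=> n; rewrite (eq_bigr _ (fun i _ => conv_addl _ _ _ _)) big_split /=.
by rewrite opprD addrACA; apply: idealD.
Qed.

Lemma coker_spanned_delta d x : coker_span d x -> coker_spanned (delta_seq d x).
Proof.
move=> [c [c_deg c0 Kx]].
exists (fun i => delta_seq (d - deg i) (c i)); split.
  move=> i; split; last by exists (d - deg i).+1 => k lt_k; rewrite /delta_seq gtn_eqF.
  move=> k; rewrite /delta_seq; case: eqP => [-> | _]; last exact: ideal0.
  by case: (leqP (deg i) d) => [/c_deg // | /c0 ->]; apply: ideal0.
move=> n; rewrite (eq_bigr _ (fun i _ => conv_delta _ _ _ _ _)).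
have [-> | ne_nd] := eqVneq n d.
  congr (ideal_pow K d (_ - _)): Kx; first by rewrite /delta_seq eqxx.
  apply: eq_bigr => i _; rewrite /delta_seq.
  by case: (leqP (deg i) d) => [/subnK -> | /c0 ->]; rewrite ?eqxx ?mul0r ?if_same.
rewrite big1 => [|i _]; first by rewrite /delta_seq (negPf ne_nd) subrr; apply: ideal0.
rewrite /delta_seq; case: eqP => // nE; case: (leqP (deg i) d) => [le_i | /c0 ->].
  by move: ne_nd; rewrite nE subnK // eqxx.
by rewrite mul0r.
Qed.

Lemma coker_spanned_rep y :
  (forall n, coker_span n (y n)) -> (exists D, forall n, (D <= n)%N -> y n = 0) ->
  coker_spanned y.
Proof.
move=> y_span [D]; elim: D y y_span => [|D IH] y y_span y0.
  exists (fun _ _ => 0); split=> [i | n].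
    by split=> [k|]; [apply: ideal0 | exists 0%N].
  rewrite y0 // big1 => [|i _]; last exact: conv0l.
  by rewrite subr0; apply: ideal0.
pose y' n := if n == D then 0 else y n.
have yE n : y n = y' n + delta_seq D (y D) n.
  by rewrite /y' /delta_seq; case: eqP => [-> | _]; rewrite ?add0r ?addr0.
have [|cs [cs_rep Ky]] := coker_spannedD (y := y') _ (coker_spanned_delta (y_span D)).
- apply: IH => [n | n le_Dn]; rewrite /y'; case: eqP => // ne_nD.
    exact: ideal0 (coker_span_ideal n).
  by apply: y0; rewrite ltn_neqAle eq_sym le_Dn andbT; apply/eqP.
by exists cs; split=> // n; rewrite yE.
Qed.

End CokerSpan.

Lemma noetherian_pow_generators (R : comUnitRingType) (I : R -> Prop) N :
  noetherian R -> ideal I ->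
  exists r (deg : 'I_r -> nat) (G : 'I_r -> R),
    (forall i, ideal_pow I (deg i) (G i)) /\
    forall n, (n < N)%N -> forall x, ideal_pow I n x ->
      exists c : 'I_r -> R, (forall i, deg i != n -> c i = 0) /\
                            x = \sum_(i < r) c i * G i.
Proof.
move=> noeth iI.
have [pg pgE] : exists pg : 'I_N -> nat * (nat -> R), forall (j : 'I_N) x,
    ideal_pow I j x <-> span_range (pg j).2 0 (pg j).1 x.
  apply: (@fin_all_exists _ (fun=> (nat * (nat -> R))%type)
    (fun (j : 'I_N) (u : nat * (nat -> R)) =>
       forall x, ideal_pow I j x <-> span_range u.2 0 u.1 x)) => j.
  by have [p [g gE]] := noeth _ (ideal_pow_ideal j iI); exists (p, g).
(* The generators of each I^j are padded with zeros to a common length M and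
   indexed by the pairs (j, t). *)
pose M := (\max_(j < N) (pg j).1)%N.
pose Gjt (j : 'I_N) (t : nat) := if (t < (pg j).1)%N then (pg j).2 t else 0.
pose ev (i : 'I_#|{: 'I_N * 'I_M}|) := enum_val i.
exists #|{: 'I_N * 'I_M}|, (fun i => nat_of_ord (ev i).1), (fun i => Gjt (ev i).1 (ev i).2).
split=> [i | n lt_nN x /(pgE (Ordinal lt_nN)) [e xE]].
  rewrite /Gjt; case: ifP => [lt_t | _]; last exact: ideal0 (ideal_pow_ideal _ iI).
  by apply/pgE; apply: span_range_mem.
set j := Ordinal lt_nN.
exists (fun i => if (ev i).1 == j then e (ev i).2 else 0); split=> [i ne_n|].
  by case: eqP => // ejE; rewrite ejE eqxx in ne_n.
have sum_pairs (F : 'I_N -> 'I_M -> R) :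
    \sum_(i < #|{: 'I_N * 'I_M}|) F (ev i).1 (ev i).2 = \sum_(j < N) \sum_(t < M) F j t.
  by rewrite pair_bigA (big_enum_val (A := {: 'I_N * 'I_M}) (fun p => F p.1 p.2)).
rewrite xE (sum_pairs (fun j' t => (if j' == j then e t else 0) * Gjt j' t)).
rewrite (bigD1 j) //= [X in _ + X]big1 => [|j' ne_j]; last first.
  by apply: big1 => t _; rewrite (negPf ne_j) mul0r.
rewrite eqxx addr0 big_mkord.
have le_pM : ((pg j).1 <= M)%N by exact: (@leq_bigmax _ (fun j0 : 'I_N => (pg j0).1) j).
rewrite (big_ord_widen _ (fun t => e t * (pg j).2 t) le_pM) big_mkcond.
by apply: eq_bigr => t _; rewrite /Gjt; case: ifP; rewrite ?mulr0.
Qed.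

Lemma coker_finite_of_reduction (R : comUnitRingType) (m I a J K : R -> Prop) N :
  noetherian R -> ideal m -> ideal I -> ideal a -> ideal K ->
  (forall x, a x -> K x) -> (forall x, J x -> K x) ->
  (forall n, (N <= n)%N -> forall x, ideal_pow I n x ->
      ideal_add (ideal_mul a (ideal_pow I n.-1)) (ideal_pow J n) x) ->
  coker_finite m I K a.
Proof.
move=> noeth im iI ia iK aK JK reduction.
have [r [deg [G [GI gens]]]] := noetherian_pow_generators N.+1 noeth iI.
have span_all : forall n x, ideal_pow I n x -> coker_span a K deg G n x.
  apply: (coker_span_of_reduction ia iK aK JK (N := N.+1)) => // [n /ltnW|]; first exact: reduction.
  move=> n lt_n x /(gens n lt_n) [c [c0 ->]]; exists c; split=> [i le_i | i lt_i |].
  - have [-> | ne_i] := eqVneq (deg i) n; first by rewrite subnn.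
    by rewrite c0 //; apply: ideal0; apply: ideal_pow_ideal.
  - by apply: c0; rewrite gtn_eqF.
  - by rewrite subrr; apply: ideal0; apply: ideal_pow_ideal.
exists r, (gen_seq deg G); split=> [i | y [y_I y_bd]].
  split=> [n|]; last by exists (deg i).+1 => n lt_n; rewrite /gen_seq /delta_seq gtn_eqF.
  rewrite /gen_seq /delta_seq; case: eqP => [-> // | _].
  exact: ideal0 (ideal_pow_ideal _ iI).
have [cs [cs_rep Ky]] := coker_spanned_rep ia iK (fun n => span_all n _ (y_I n)) y_bd.
exists cs; split=> // n; apply: ideal_add_meml => //.
by apply: ideal_mul_ideal => //; apply: ideal_pow_ideal.
Qed.

(* The degree-[0] term of the convolution vanishes, and every other term has a
   factor from [a]. *)
Lemma conv_mem_mul_pow (R : comUnitRingType) (a I : R -> Prop) (c g : nat -> R) n :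
  ideal a -> ideal I -> (forall x, a x -> I x) ->
  (forall k, ideal_pow a k (c k)) -> (forall k, ideal_pow I k (g k)) -> g n = 0 ->
  ideal_mul a (ideal_pow I n.-1) (conv c g n).
Proof.
move=> ia iI aI c_a g_I gn0; have iaI := ideal_mul_ideal ia (ideal_pow_ideal n.-1 iI).
rewrite /conv big_ord_recl /= subn0 gn0 mulr0 add0r.
apply: ideal_sum => // k _; apply: (ideal_mul_pow_sub (k := bump 0 k)) => //.
by rewrite /bump /=; have := ltn_ord k; lia.
Qed.

Lemma reduction_of_coker_finite (R : comUnitRingType) (m I a J K : R -> Prop) :
  noetherian R -> is_local_max m -> ideal I -> ideal a -> ideal J ->
  (forall x, a x -> I x) -> (forall x, J x -> I x) -> (forall x, K x -> ideal_add a J x) ->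
  coker_finite m I K a ->
  exists N, forall n, (N <= n)%N -> forall x, ideal_pow I n x ->
    ideal_add (ideal_mul a (ideal_pow I n.-1)) (ideal_pow J n) x.
Proof.
move=> noeth local_m iI ia iJ aI JI KaJ [r [gs [gs_rep coker_gen]]].
have im : ideal m by case: local_m.
have [Nf Nf0] : exists Nf : 'I_r -> nat, forall i n, (Nf i <= n)%N -> gs i n = 0.
  apply: (@fin_all_exists _ (fun=> nat) (fun i N => forall n, (N <= n)%N -> gs i n = 0)).
  by move=> i; have [_ []] := gs_rep i; eauto.
exists (\max_i Nf i).+1 => n lt_n x Ix.
set L := ideal_add _ _.
have iL : ideal L.
  by apply: ideal_add_ideal; [apply: ideal_mul_ideal => // |]; apply: ideal_pow_ideal.
have [p [g gE]] := noeth _ (ideal_pow_ideal n iI).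
apply: (nakayama local_m iL gE) Ix => {}x Ix.
have [|cs [cs_rep cs_gen]] := coker_gen (delta_seq n x).
  split=> [k|]; last by exists n.+1 => k lt_k; rewrite /delta_seq gtn_eqF.
  by rewrite /delta_seq; case: eqP => [-> // | _]; apply: ideal0; apply: ideal_pow_ideal.
have := cs_gen n; rewrite /delta_seq eqxx.
set S := \sum_(i < r) _ => -[k [mu [Kk mmu E]]].
have aS : ideal_mul a (ideal_pow I n.-1) S.
  apply: ideal_sum => [|i _]; first by apply: ideal_mul_ideal => //; apply: ideal_pow_ideal.
  apply: conv_mem_mul_pow => //; first by case: (cs_rep i).
    by case: (gs_rep i).
  by apply: Nf0; apply: leq_trans (leq_bigmax i) _; apply: ltnW.
have -> : x = (S + k) + mu by rewrite -addrA -E addrC subrK.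
exists (S + k), mu; split=> //; apply: idealD => //.
  by apply: ideal_add_meml => //; apply: ideal_pow_ideal.
exact: ideal_pow_sub_add ia iJ iI aI JI KaJ Kk.
Qed.

Theorem corollary2p6 (R : comUnitRingType) (m I : R -> Prop) (l s : nat)
  (f : nat -> R) :
  noetherian R -> is_local_max m -> ideal I ->
  analytic_spread m I l -> (0 < l)%N ->
  (forall i, (1 <= i <= l + s)%N -> I (f i)) ->
  ((exists N, forall n, (N <= n)%N -> forall x,
      ideal_pow I n x <->
      ideal_add (ideal_mul (span_range f 1 l) (ideal_pow I n.-1))
                (ideal_pow (span_range f l (l + s).+1) n) x)
   <-> coker_finite m I (span_range f 1 (l + s).+1) (span_range f 1 l)).
Proof.
move=> noeth local_m iI _ l_gt0 fI.
have ia := span_range_ideal f 1 l; have iJ := span_range_ideal f l (l + s).+1.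
have span_sub_I lo hi x : (0 < lo)%N -> (hi <= (l + s).+1)%N -> span_range f lo hi x -> I x.
  by move=> lo_gt0 hi_le; apply: span_range_sub => // i /andP[? ?]; apply: fI; lia.
have aI x := span_sub_I 1 l x isT (leq_trans (leq_addr s l) (leqnSn _)).
have JI x := span_sub_I l (l + s).+1 x l_gt0 (leqnn _).
split=> [[N reduction] | coker_fin].
  apply: (coker_finite_of_reduction (J := span_range f l (l + s).+1) (N := N)) => //.
  - by case: local_m.
  - exact: span_range_ideal.
  - by move=> x; apply: span_range_mono; lia.
  - by move=> x; apply: span_range_mono; lia.
  - by move=> n le_n x /(reduction n le_n).
have KaJ x : span_range f 1 (l + s).+1 x ->
    ideal_add (span_range f 1 l) (span_range f l (l + s).+1) x.
  by apply: span_range_split; apply/andP; split; lia.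
have [N reduction] := reduction_of_coker_finite noeth local_m iI ia iJ aI JI KaJ coker_fin.
exists N.+1 => n lt_n x; split; first exact: reduction (ltnW lt_n) x.
case: n lt_n => // n _; exact: ideal_pow_add_sub.
Qed.
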